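(* Let $F(x)=x^{-1}$ on $GF(2^m)$ (i.e. $F(x)=x^{2^m-2}$, $F(0)=0$) and $S=STS(\mathcal H^n)$. If $m$ is odd, then at every nonzero point $a$ the self-embedding $S\cup F(S)$ has exactly $(2^m-2)/6$ rotation lines, each with $6$ points. If $m$ is even, then at every nonzero point there are exactly $(2^m-4)/6$ rotation lines with $6$ points each and one rotation line with $2$ points.
   Context: $n=2^m-1$. $S=STS(\mathcal H^n)$ is the set of 3-subsets $\{a,b,c\}$ of nonzero elements of $GF(2^m)$ with $a+b+c=0$; $F(S)=\{\{F(a),F(b),F(c)\}:\{a,b,c\}\in S\}$. For nonzero $a$, let $P_a=GF(2^m)\setminus\{0,a\}$, $s_a(y)=a+y$ and $\psi_a(y)=F(F^{-1}(a)+F^{-1}(y))$. The rotation lines at $a$ are the orbits on $P_a$ of the group generated by the involutions $s_a,\psi_a$; the number of points of a rotation line is the size of the orbit. *)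

From HB Require Import structures.
From mathcomp Require Import all_boot all_order all_algebra all_field.
Set Implicit Arguments. Unset Strict Implicit. Unset Printing Implicit Defensive.
Import GRing.Theory.
Local Open Scope ring_scope.

Section Rotation.
Variable K : finFieldType.

(* The inverse map F(x) = x^{-1}, F(0) = 0 (MathComp's 0^-1 = 0). *)
Definition Finv_map (x : K) : K := x^-1.

Definition Pa (a : K) : {set K} := [set y | (y != 0) && (y != a)].

Definition s_map (a y : K) : K := a + y.

(* psi_a(y) = F(F^{-1}(a) + F^{-1}(y)); here F = F^{-1} = inversion. *)
Definition psi_map (a y : K) : K := Finv_map (Finv_map a + Finv_map y).

Definition rot_step (a : K) : rel K :=
  fun y z => (z == s_map a y) || (z == psi_map a y).

(* orbit of y under the group generated by s_a and psi_a
   (finite set, bijections: forward closure = group orbit) *)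
Definition rot_line (a y : K) : {set K} := [set z | connect (rot_step a) y z].

Definition rot_lines (a : K) : {set {set K}} := [set rot_line a y | y in Pa a].
End Rotation.

From HB Require Import structures.
From mathcomp Require Import all_boot all_order all_algebra all_field.
From mathcomp Require Import all_fingroup all_solvable.
From mathcomp Require Import ring.
Set Implicit Arguments. Unset Strict Implicit. Unset Printing Implicit Defensive.
Import GRing.Theory.
Local Open Scope ring_scope.

(* At a point a != 0, the two generators s_a(y) = a + y and
   psi_a(y) = (a^-1 + y^-1)^-1 are fixed-point-free involutions of GF(2^m)
   whose product rho = psi_a o s_a has order dividing 3 (rho y = a + a^2/y on
   P_a, rho fixes 0 and a).  So <s_a, psi_a> is a quotient of the dihedral
   group of order 6 and every orbit is {y, rho y, rho^2 y} together with its
   image under s_a: it has 2 points when rho y = y and 6 otherwise.  On P_a,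
   rho y = y means y^2 + a y + a^2 = 0, i.e. y/a is a primitive cube root of
   unity; such roots exist iff 3 | 2^m - 1, i.e. iff m is even, and then the
   two roots form a single line.  Counting points of P_a, which the lines
   partition, gives the numbers of lines. *)

Section DihedralOrbits.
Variables (T : finType) (s p : T -> T).
Hypotheses (sK : involutive s) (pK : involutive p).
Hypotheses (s_nofix : forall x, s x != x) (p_nofix : forall x, p x != x).

Definition rot (x : T) : T := p (s x).
Definition refl_step : rel T := fun x y => (y == s x) || (y == p x).
Definition rot_cycle (x : T) : {set T} := [set x; rot x; rot (rot x)].

Hypothesis rot3 : forall x, rot (rot (rot x)) = x.

Lemma rot_inj : injective rot.
Proof. exact: (can_inj (g := rot \o rot) rot3). Qed.

Lemma s_rot x : s (rot x) = rot (rot (s x)).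
Proof. by have := rot3 (s (p (s x))); rewrite /rot !(sK, pK). Qed.

Lemma refl_step_sym : symmetric refl_step.
Proof.
move=> x y; rewrite /refl_step; congr orb; apply/eqP/eqP => ->;
  by rewrite (sK, pK).
Qed.

Lemma rot_cycle_rot x z : z \in rot_cycle x -> rot z \in rot_cycle x.
Proof. by rewrite !inE => /orP[/orP[]|] /eqP->; rewrite ?rot3 eqxx ?orbT. Qed.

Lemma rot_cycle_s x z : z \in rot_cycle x -> s z \in rot_cycle (s x).
Proof.
by rewrite !inE => /orP[/orP[]|] /eqP->; rewrite ?s_rot ?rot3 eqxx ?orbT.
Qed.

Lemma rot_cycle_eq x z : z \in rot_cycle x -> rot_cycle z = rot_cycle x.
Proof.
rewrite !inE => /orP[/orP[]|] /eqP-> //; apply/setP => y; rewrite !inE rot3.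
  by rewrite orbC orbA.
by rewrite -orbA orbC.
Qed.

Lemma card_rot_cycle x : #|rot_cycle x| = if rot x == x then 1%N else 3%N.
Proof.
case: eqP => [fx|/eqP nfx].
  have -> : rot_cycle x = [set x] by apply/setP => y; rewrite !inE !fx !orbb.
  exact: cards1.
have n2 : rot (rot x) != x.
  by apply: contra nfx => /eqP f2; rewrite -{1}f2 rot3.
have n12 : rot (rot x) != rot x by rewrite (inj_eq rot_inj).
rewrite /rot_cycle -setUA cardsU1 cards2 !inE.
by rewrite ![x == _]eq_sym (negbTE nfx) (negbTE n2) eq_sym n12.
Qed.

Lemma rot_fix_s x : (rot (s x) == s x) = (rot x == x).
Proof.
rewrite /rot sK; apply/eqP/eqP => [<-|psx]; first by rewrite pK.
by rewrite -{1}psx pK.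
Qed.

(* s x is neither x, nor rot x = p (s x), nor rot^2 x (else p x = x). *)
Lemma s_notin_rot_cycle x : s x \notin rot_cycle x.
Proof.
rewrite !inE !negb_or s_nofix /=; apply/andP; split.
  by rewrite /rot eq_sym p_nofix.
apply: contra (p_nofix x) => /eqP e.
by rewrite -[x in _ == x]rot3 -e /rot sK.
Qed.

Lemma rot_cycles_disjoint x : [disjoint rot_cycle x & rot_cycle (s x)].
Proof.
apply/pred0P => z /=; apply/negbTE/andP => [[zx zsx]].
have := s_notin_rot_cycle x.
by rewrite -(rot_cycle_eq zx) (rot_cycle_eq zsx) !inE eqxx.
Qed.

Lemma refl_orbitE x :
  [set z | connect refl_step x z] = rot_cycle x :|: rot_cycle (s x).
Proof.
set U := _ :|: _.
have conn_s z : connect refl_step z (s z).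
  by apply: connect1; rewrite /refl_step eqxx.
have conn_rot z : connect refl_step z (rot z).
  by apply: connect_trans (conn_s z) (connect1 _); rewrite /refl_step eqxx orbT.
have U_rot z : z \in U -> rot z \in U.
  by case/setUP => /rot_cycle_rot Hz; apply/setUP; [left|right].
have U_s z : z \in U -> s z \in U.
  case/setUP => /rot_cycle_s Hz; apply/setUP; [right|left] => //.
  by rewrite sK in Hz.
have U_closed : closed refl_step U.
  apply: (intro_closed (sym_connect_sym refl_step_sym)).
  move=> y z /orP[] /eqP-> /U_s //.
  by move/U_rot; rewrite /rot sK.
apply/setP => z; rewrite inE; apply/idP/idP => [xz|].
  by rewrite -(closed_connect U_closed xz) !inE eqxx.
have reach y w : w \in rot_cycle y -> connect refl_step y w.
  rewrite !inE => /orP[/orP[]|] /eqP-> //.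
  exact: connect_trans (conn_rot y) (conn_rot _).
case/setUP => [/reach //|/reach]; exact: connect_trans (conn_s x).
Qed.

Lemma card_refl_orbit x :
  #|[set z | connect refl_step x z]| = if rot x == x then 2%N else 6%N.
Proof.
rewrite refl_orbitE cardsU.
have /disjoint_setI0 -> := rot_cycles_disjoint x.
by rewrite cards0 subn0 !card_rot_cycle rot_fix_s; case: ifP.
Qed.

End DihedralOrbits.

(* In characteristic 2 a root t of X^2 + X + 1 satisfies t^3 = 1 and t != 1;
   when #|F| = 2 mod 3, t^#|F| = t forces t^2 = t, so there is no root. *)
Lemma no_X2X1_root (F : finFieldType) (t : F) :
  2%N \in [pchar F] -> (#|F| %% 3 = 2)%N -> t^+2 + t + 1 != 0.
Proof.
move=> F2 F3; apply/negP => /eqP t0.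
have t3 : t^+3 = 1.
  have : (t + 1) * (t^+2 + t + 1) = t^+3 + 1 + 2%:R * (t^+2 + t) by ring.
  rewrite t0 mulr0 (pcharf0 F2) mul0r addr0 => /esym/eqP.
  by rewrite addr_eq0 (oppr_pchar2 F2) => /eqP.
have tnz : t != 0.
  by apply: contra_eq_neq t3 => ->; rewrite expr0n /= eq_sym oner_eq0.
have t2 : t^+2 = t.
  rewrite -{2}(expf_card t) (divn_eq #|F| 3) F3.
  by rewrite exprD exprM exprAC t3 expr1n mul1r.
have t1 : t = 1 by apply: (mulfI tnz); rewrite mulr1 -expr2.
by move: t0; rewrite t1 expr1n (addrr_pchar2 F2) add0r => /eqP; rewrite oner_eq0.
Qed.

(* If 3 divides the order of the unit group, Cauchy's theorem gives a unit of
   order 3, i.e. a primitive cube root of unity, which is a root of X^2+X+1. *)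
Lemma X2X1_root_exists (F : finFieldType) :
  (3 %| #|F|.-1)%N -> exists w : F, w^+2 + w + 1 = 0.
Proof.
rewrite -card_finField_unit => d3.
have [u _ ou] := Cauchy (G := [set: {unit F}]%G) (isT : prime 3) d3.
have w3 : (val u)^+3 = 1 by rewrite -FinRing.val_unitX -ou expg_order.
have w1 : val u != 1.
  apply/eqP => u1; have u_1 : u = 1%g by apply: val_inj.
  by move: ou; rewrite u_1 order1.
exists (val u); apply/eqP; move: w3.
have -> : (val u)^+3 = (val u - 1) * ((val u)^+2 + val u + 1) + 1 by ring.
rewrite -[X in _ = X]add0r => /addIr/eqP.
by rewrite mulf_eq0 subr_eq0 (negbTE w1).
Qed.

Lemma pow2_mod3 m : (2 ^ m %% 3 = if odd m then 2 else 1)%N.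
Proof. by elim: m => // m IH; rewrite expnS -modnMmr IH /=; case: odd. Qed.

Lemma sum_card_const (T : finType) (P : {set {set T}}) (k : nat) :
  {in P, forall L : {set T}, #|L| = k} -> (\sum_(L in P) #|L| = k * #|P|)%N.
Proof. by move=> sizes; rewrite (eq_bigr _ sizes) sum_nat_const mulnC. Qed.

Lemma sum_card_two_sizes (T : finType) (P : {set {set T}}) (i j : nat) :
  i != j -> {in P, forall L : {set T}, (#|L| == i) || (#|L| == j)} ->
  (\sum_(L in P) #|L|
     = i * #|[set L in P | #|L| == i]| + j * #|[set L in P | #|L| == j]|)%N.
Proof.
move=> ij sizes; rewrite (bigID (fun L : {set T} => #|L| == i)) /=.
have sizeP k : {in [set L in P | #|L| == k], forall L : {set T}, #|L| = k}.
  by move=> L; rewrite inE => /andP[_ /eqP].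
rewrite -(sum_card_const (sizeP i)) -(sum_card_const (sizeP j)).
congr (_ + _); apply: eq_bigl => L; rewrite inE //.
case LP: (L \in P) => //=.
by case/orP: (sizes L LP) => /eqP->; rewrite ?eqxx ?(negbTE ij) // eq_sym.
Qed.

Section InversionRotationLines.
Variables (K : finFieldType) (a : K).
Hypotheses (K2 : 2%N \in [pchar K]) (a0 : a != 0).

Local Notation rho := (rot (s_map a) (psi_map a)).

Let two0 : 2%:R = 0 :> K.
Proof. exact: pcharf0 K2. Qed.

Lemma s_mapK : involutive (s_map a).
Proof. exact: addKr_pchar2 K2 a. Qed.

Lemma psi_mapK : involutive (psi_map a).
Proof.
by move=> y; rewrite /psi_map /Finv_map invrK (addKr_pchar2 K2) invrK.
Qed.

Lemma s_map_nofix y : s_map a y != y.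
Proof. by rewrite /s_map -subr_eq0 addrK. Qed.

Lemma psi_map_nofix y : psi_map a y != y.
Proof.
rewrite /psi_map /Finv_map -[X in _ != X]invrK (inj_eq invr_inj).
by rewrite -subr_eq0 addrK invr_eq0.
Qed.

Lemma rho_Pa y : y \in Pa a -> rho y = a + a^+2 / y.
Proof.
rewrite inE => /andP[y0 ya].
have ay0 : a + y != 0 by rewrite addr_eq0 (oppr_pchar2 K2) eq_sym.
rewrite /rot /psi_map /Finv_map /s_map.
have -> : a^-1 + (a + y)^-1 = y / (a * (a + y)) + 2%:R * (a + y)^-1.
  by field; rewrite ay0 a0.
by rewrite two0 mul0r addr0 invf_div; field.
Qed.

Lemma rho_Pa_closed y : y \in Pa a -> a + a^+2 / y \in Pa a.
Proof.
rewrite !inE => /andP[y0 ya]; have ay0 : y + a != 0.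
  by rewrite addr_eq0 (oppr_pchar2 K2).
have -> : a + a^+2 / y = a * (y + a) / y by field.
rewrite !mulf_neq0 ?invr_eq0 //= -subr_eq0.
have -> : a * (y + a) / y - a = a^+2 / y by field.
by rewrite mulf_neq0 ?invr_eq0 ?expf_neq0.
Qed.

Lemma rho0 : rho 0 = 0.
Proof.
by rewrite /rot /psi_map /Finv_map /s_map addr0 (addrr_pchar2 K2) invr0.
Qed.

Lemma rho_a : rho a = a.
Proof.
by rewrite /rot /psi_map /Finv_map /s_map (addrr_pchar2 K2) invr0 addr0 invrK.
Qed.

(* rho has order dividing 3: on P_a, rho^2 y = a^2/(a + y). *)
Lemma rho3 y : rho (rho (rho y)) = y.
Proof.
have [->|y0] := eqVneq y 0; first by rewrite !rho0.
have [->|ya] := eqVneq y a; first by rewrite !rho_a.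
have yP : y \in Pa a by rewrite inE y0 ya.
have ry := rho_Pa_closed yP; have rry := rho_Pa_closed ry.
rewrite (rho_Pa yP) (rho_Pa ry) (rho_Pa rry).
have ay0 : a + y != 0 by rewrite addr_eq0 (oppr_pchar2 K2) eq_sym.
have aya : a * y + a^+2 != 0 by rewrite expr2 -mulrDr mulf_neq0 // addrC.
have -> : a + a^+2 / (a + a^+2 / y) = a^+2 / (a + y) + 2%:R * (a * y / (a + y)).
  by field; rewrite ay0 y0 aya.
rewrite two0 mul0r addr0.
have -> : a + a^+2 / (a^+2 / (a + y)) = y + 2%:R * a by field; rewrite ay0 a0.
by rewrite two0 mul0r addr0.
Qed.

Lemma card_rot_line y : #|rot_line a y| = if rho y == y then 2%N else 6%N.
Proof. exact: (card_refl_orbit s_mapK psi_mapK s_map_nofix psi_map_nofix rho3). Qed.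

Lemma rho_fixed y : y \in Pa a -> (rho y == y) = (y^+2 + a * y + a^+2 == 0).
Proof.
move=> yP; rewrite (rho_Pa yP); move: yP; rewrite inE => /andP[y0 _].
have -> : y^+2 + a * y + a^+2 = y * (y - (a + a^+2 / y)) + 2%:R * (a * y + a^+2).
  by field.
by rewrite two0 mul0r addr0 mulf_eq0 (negbTE y0) subr_eq0 eq_sym.
Qed.

Lemma card_rot_line_Pa y : y \in Pa a ->
  #|rot_line a y| = if y^+2 + a * y + a^+2 == 0 then 2%N else 6%N.
Proof. by move=> yP; rewrite card_rot_line rho_fixed. Qed.

Lemma rot_step_csym : connect_sym (rot_step a).
Proof. exact: sym_connect_sym (refl_step_sym s_mapK psi_mapK). Qed.

Lemma rot_line_s y : rot_line a (s_map a y) = rot_line a y.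
Proof.
have sy : connect (rot_step a) (s_map a y) y.
  by rewrite rot_step_csym; apply: connect1; rewrite /rot_step eqxx.
by apply/setP => z; rewrite !inE (same_connect rot_step_csym sy).
Qed.

Lemma rot_line0 : rot_line a 0 = [set 0; a].
Proof.
apply/esym/eqP; rewrite eqEcard card_rot_line rho0 eqxx cards2 eq_sym a0 andbT.
apply/subsetP => z; rewrite !inE => /orP[] /eqP->; first exact: connect0.
by apply: connect1; rewrite /rot_step /s_map addr0 eqxx.
Qed.

Lemma Pa_compl : Pa a = ~: rot_line a 0.
Proof. by apply/setP => y; rewrite rot_line0 !inE negb_or. Qed.

Lemma card_Pa : #|Pa a| = (#|K| - 2)%N.
Proof.
by rewrite Pa_compl -(cardsC (rot_line a 0)) rot_line0 cards2 eq_sym a0 addKn.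
Qed.

(* P_a is a union of orbits, so the rotation lines at a partition it. *)
Lemma rot_lines_partition : partition (rot_lines a) (Pa a).
Proof.
have Pa_closed y z : connect (rot_step a) y z -> y \in Pa a -> z \in Pa a.
  rewrite !Pa_compl !inE => yz; apply: contra => z0.
  by apply: connect_trans z0 _; rewrite rot_step_csym.
have -> : rot_lines a = equivalence_partition (connect (rot_step a)) (Pa a).
  apply: eq_in_imset => y yP; apply/setP => z; rewrite !inE.
  by apply/esym/andb_idl => /Pa_closed /(_ yP); rewrite inE.
apply: equivalence_partitionP => x y z _ _ _; split; first exact: connect0.
by move=> xy; rewrite (same_connect rot_step_csym xy).
Qed.

(* y^2 + a y + a^2 = a^2 ((y/a)^2 + y/a + 1): short lines come from cube
   roots of unity. *)
Lemma no_short_line y : (#|K| %% 3 = 2)%N -> y^+2 + a * y + a^+2 != 0.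
Proof.
move=> K3; have -> : y^+2 + a * y + a^+2 = a^+2 * ((y / a)^+2 + y / a + 1).
  by field.
by rewrite mulf_neq0 ?expf_neq0 ?no_X2X1_root.
Qed.

Lemma exists_short_line : (3 %| #|K|.-1)%N ->
  exists2 y, y \in Pa a & y^+2 + a * y + a^+2 = 0.
Proof.
move=> /X2X1_root_exists[w w0]; exists (a * w); last first.
  by rewrite -[RHS](mulr0 (a^+2)) -w0; ring.
have w_ne0 : w != 0.
  by apply: contra_eq_neq w0 => ->; rewrite expr0n !add0r oner_neq0.
have w_ne1 : w != 1.
  by apply: contra_eq_neq w0 => ->; rewrite expr1n (addrr_pchar2 K2) add0r oner_neq0.
rewrite inE mulf_neq0 //= -[X in _ != X]mulr1.
by rewrite (inj_eq (mulfI a0)).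
Qed.

Lemma short_line_roots y z :
  y^+2 + a * y + a^+2 = 0 -> z^+2 + a * z + a^+2 = 0 -> z = y \/ z = s_map a y.
Proof.
move=> Qy Qz; have : (z + y) * (z + s_map a y) = 0.
  have -> : (z + y) * (z + s_map a y) = (z^+2 + a * z + a^+2)
           + (y^+2 + a * y + a^+2) + 2%:R * (y * z - a^+2) by rewrite /s_map; ring.
  by rewrite Qy Qz two0 !(mul0r, addr0).
move/eqP; rewrite mulf_eq0 !addr_eq0 !(oppr_pchar2 K2).
by case/orP => /eqP; [left|right].
Qed.

Lemma short_lines y0 : y0 \in Pa a -> y0^+2 + a * y0 + a^+2 = 0 ->
  [set L in rot_lines a | #|L| == 2%N] = [set rot_line a y0].
Proof.
move=> y0P Qy0; apply/setP => L; rewrite !inE; apply/andP/eqP => [[]|->].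
  case/imsetP => y yP ->; rewrite card_rot_line_Pa //.
  case: ifP => [/eqP Qy _|//].
  by have [->|->] := short_line_roots Qy0 Qy; rewrite ?rot_line_s.
by rewrite imset_f // card_rot_line_Pa // Qy0 eqxx.
Qed.

End InversionRotationLines.

Theorem mainTheorem14 (K : finFieldType) (m : nat)
  (hchar : (2%N \in [pchar K])) (hcard : #|K| = (2 ^ m)%N) :
  forall a : K, a != 0 ->
    (odd m ->
       #|rot_lines a| = ((2 ^ m - 2) %/ 6)%N /\
       (forall L, L \in rot_lines a -> #|L| = 6%N)) /\
    (~~ odd m ->
       #|[set L in rot_lines a | #|L| == 6%N]| = ((2 ^ m - 4) %/ 6)%N /\
       #|[set L in rot_lines a | #|L| == 2%N]| = 1%N /\
       (forall L, L \in rot_lines a -> (#|L| == 6%N) || (#|L| == 2%N))).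
Proof.
move=> a a0.
have sum_lines : (\sum_(L in rot_lines a) #|L| = 2 ^ m - 2)%N.
  by rewrite -(card_partition (rot_lines_partition hchar a0)) (card_Pa hchar a0) hcard.
split=> [om|em].
- have K3 : (#|K| %% 3 = 2)%N by rewrite hcard pow2_mod3 om.
  have all6 : {in rot_lines a, forall L : {set K}, #|L| = 6%N}.
    move=> _ /imsetP[y yP ->].
    by rewrite (card_rot_line_Pa hchar a0 yP) (negbTE (no_short_line hchar a0 y K3)).
  by split=> //; rewrite -sum_lines (sum_card_const all6) mulKn.
- have K3 : (3 %| #|K|.-1)%N.
    by rewrite hcard -subn1 -eqn_mod_dvd ?expn_gt0 // pow2_mod3 (negbTE em).
  have [y0 y0P Qy0] := exists_short_line hchar a0 K3.
  have sizes : {in rot_lines a, forall L : {set K}, (#|L| == 6%N) || (#|L| == 2%N)}.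
    by move=> _ /imsetP[y yP ->]; rewrite (card_rot_line_Pa hchar a0 yP); case: ifP.
  have one2 : #|[set L in rot_lines a | #|L| == 2%N]| = 1%N.
    by rewrite (short_lines hchar a0 y0P Qy0) cards1.
  split; last by [].
  move: sum_lines; rewrite (sum_card_two_sizes _ sizes) // one2 => E.
  by rewrite -[4%N]/(2 + 2)%N subnDA -E addnK mulKn.
Qed.
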